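(* Let $(G,\mathcal{C})$ be a CER graph. If $\{v,w\}\in\tilde E$ and $c(v,w)=k\in F_i$ for some $i\in[r]$, then $c(v)=c(w)=i$.
   Context: $G=(V,E)$ finite simple undirected graph, $V=[p]$; coloring: vertex color classes $V_1,\dots,V_r$, edge color classes $E_{r+1},\dots,E_{r+R}$ partitioning $E$. $\tilde E=E\cup\{\{v\}:v\in V\}$, $E_i=\{\{v\}:v\in V_i\}$; $c(v,w)=k$ iff $\{v,w\}\in E_k$; $c(v)=c(v,v)$. $F_i=\{c(v,w):\{v,w\}\in\tilde E,\ c(v)=c(w)=i\}$. For an ordering $(V_{\eta_1},\dots,V_{\eta_r})$: $\pi(v)=i$ iff $v\in V_{\eta_i}$, $V_{\le i}=V_{\eta_1}\cup\dots\cup V_{\eta_i}$; it is a cpeo if every $v\in V_{\eta_i}$ is simplicial (neighbours form a clique) in $G[V_{\eta_i}\cup\dots\cup V_{\eta_r}]$; $m_{v\to w}(k,h)=|\{u\in V_{\le\min(\pi(v),\pi(w))}: c(v,u)=k, c(u,w)=h\}|$ and $m_{v\leftrightarrow w}(k,h)=m_{v\to w}(k,h)+m_{v\to w}(h,k)$ for $\{v,w\}\in\tilde E$. (M1): $c(v,w)=c(v',w')$ implies $m_{v\leftrightarrow w}=m_{v'\leftrightarrow w'}$. $(G,\mathcal{C})$ is CER if some ordering is a cpeo and satisfies (M1). *)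

From mathcomp Require Import all_boot all_fingroup.
Set Implicit Arguments. Unset Strict Implicit. Unset Printing Implicit Defensive.

(* Colored graph (G, C) on V = 'I_p (i.e. [p], 0-indexed).
   Colours are 0-indexed naturals: vertex colours are 0..r-1 (vcol : 'I_p -> 'I_r),
   edge colours are r..r+R-1 (ecol v w for an edge {v,w}). *)

Section ColoredGraph.
Variables (p r R : nat) (e : rel 'I_p) (vcol : 'I_p -> 'I_r)
          (ecol : 'I_p -> 'I_p -> nat).

Definition inEt (v w : 'I_p) : bool := (v == w) || e v w.

(* c(v,w); only meaningful when {v,w} in E~.  c(v) = c(v,v). *)
Definition col (v w : 'I_p) : nat := if v == w then nat_of_ord (vcol v) else ecol v w.

Definition is_colored_graph : Prop :=
  [/\ symmetric e, irreflexive e,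
      (forall v w, e v w -> ecol v w = ecol w v),
      (forall v w, e v w -> r <= ecol v w < r + R) &
      ((forall i : 'I_r, exists v, vcol v = i) /\
       (forall k, r <= k < r + R -> exists v w, e v w /\ ecol v w = k))].

(* Ordering (V_{eta_0}, ..., V_{eta_{r-1}}) given by eta : {perm 'I_r};
   pi v = i iff v in V_{eta_i}. *)
Definition pos (eta : {perm 'I_r}) (v : 'I_p) : nat :=
  nat_of_ord ((eta^-1)%g (vcol v)).

Definition simplicial_in (S : pred 'I_p) (v : 'I_p) : Prop :=
  forall u w, S u -> S w -> e v u -> e v w -> u != w -> e u w.

Definition cpeo (eta : {perm 'I_r}) : Prop :=
  forall v, simplicial_in (fun u => pos eta v <= pos eta u) v.

Definition mto (eta : {perm 'I_r}) (v w : 'I_p) (k h : nat) : nat :=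
  #|[set u : 'I_p | [&& pos eta u <= minn (pos eta v) (pos eta w),
                       inEt v u, col v u == k, inEt u w & col u w == h]]|.

Definition mboth (eta : {perm 'I_r}) (v w : 'I_p) (k h : nat) : nat :=
  mto eta v w k h + mto eta v w h k.

Definition M1 (eta : {perm 'I_r}) : Prop :=
  forall v w v' w', inEt v w -> inEt v' w' -> col v w = col v' w' ->
    forall k h, mboth eta v w k h = mboth eta v' w' k h.

Definition CER : Prop := exists eta : {perm 'I_r}, cpeo eta /\ M1 eta.

Definition inF (i : 'I_r) (k : nat) : Prop :=
  exists v w, [/\ inEt v w, vcol v = i, vcol w = i & col v w = k].

End ColoredGraph.

From mathcomp Require Import all_boot all_fingroup.

(* Vertex colours are below r and edge colours at least r, so a walk v - u - w
   of [tilde E] whose first step has vertex colour i must stay at u = v, and one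
   whose second step has vertex colour i must have u = w.  Hence
   m_{v<->w}(i, c(v,w)) = [c(v) = i, pi(v) <= pi(w)] + [c(w) = i, pi(w) <= pi(v)],
   which is 2 exactly when c(v) = c(w) = i.  A pair witnessing c(v,w) in F_i has
   value 2, so (M1) forces the same for (v, w). *)

Set Implicit Arguments.
Unset Strict Implicit.
Unset Printing Implicit Defensive.

Lemma card_set1_if (T : finType) (x : T) (b : bool) :
  #|[set u | (u == x) && b]| = b.
Proof.
case: b => /=; [rewrite -(cards1 x) | rewrite -(cards0 T)];
  by apply: eq_card => u; rewrite !inE ?andbT ?andbF.
Qed.

Section WalksThroughVertexColours.

Variables (p r : nat) (e : rel 'I_p) (vcol : 'I_p -> 'I_r)
          (ecol : 'I_p -> 'I_p -> nat).
Hypothesis ecol_ge : forall v w, e v w -> r <= ecol v w.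

Local Notation inEt := (inEt e).
Local Notation col := (col vcol ecol).
Local Notation pos := (pos vcol).
Local Notation mto := (mto e vcol ecol).
Local Notation mboth := (mboth e vcol ecol).

Lemma col_ltr_eq (v w : 'I_p) : inEt v w -> (col v w < r) = (v == w).
Proof.
rewrite /inEt /col; case: eqVneq => [_ _|_ /= /ecol_ge]; first exact: ltn_ord.
by rewrite ltnNge => ->.
Qed.

Lemma mto_vcol_l eta (x y : 'I_p) (a : 'I_r) h :
  mto eta x y a h = [&& vcol x == a, pos eta x <= pos eta y, inEt x y & col x y == h].
Proof.
rewrite /mto -(card_set1_if x); apply: eq_card => u; rewrite !inE.
case: (eqVneq u x) => [->|neq] /=.
  by rewrite leq_min leqnn /inEt /col !eqxx /= (inj_eq val_inj) andbCA.
apply/negbTE/and5P => -[_ xu /eqP cxu _ _].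
by move: (ltn_ord a); rewrite -cxu col_ltr_eq // eq_sym (negbTE neq).
Qed.

Lemma mto_vcol_r eta (x y : 'I_p) (a : 'I_r) h :
  mto eta x y h a = [&& vcol y == a, pos eta y <= pos eta x, inEt x y & col x y == h].
Proof.
rewrite /mto -(card_set1_if y); apply: eq_card => u; rewrite !inE.
case: (eqVneq u y) => [->|neq] /=.
  rewrite leq_min leqnn andbT /inEt /col !eqxx /= (inj_eq val_inj).
  by case: (vcol y == a); rewrite ?andbT ?andbF.
apply/negbTE/and5P => -[_ _ _ uy /eqP cuy].
by move: (ltn_ord a); rewrite -cuy col_ltr_eq // (negbTE neq).
Qed.

Lemma mboth_vcol_eq2 eta (x y : 'I_p) (a : 'I_r) : inEt x y ->
  (mboth eta x y a (col x y) == 2) = (vcol x == a) && (vcol y == a).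
Proof.
move=> xy; rewrite /mboth mto_vcol_l mto_vcol_r xy eqxx !andbT.
case: (eqVneq (vcol x) a) => [xa|_]; case: (eqVneq (vcol y) a) => [ya|_] //=;
  first by rewrite /pos xa ya leqnn.
all: by case: (_ <= _).
Qed.

End WalksThroughVertexColours.

Theorem lemma7p4 (p r R : nat) (e : rel 'I_p) (vcol : 'I_p -> 'I_r)
    (ecol : 'I_p -> 'I_p -> nat) :
  is_colored_graph R e vcol ecol ->
  CER e vcol ecol ->
  forall (v w : 'I_p) (k : nat) (i : 'I_r),
    inEt e v w -> col vcol ecol v w = k -> inF e vcol ecol i k ->
    vcol v = i /\ vcol w = i.
Proof.
case=> _ _ _ ecol_range _ [eta [_ M1_eta]] v w k i vw <- [v' [w' [vw' v'i w'i colv'w']]].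
have ecol_ge x y : e x y -> r <= ecol x y by case/ecol_range/andP.
have := M1_eta v w v' w' vw vw' (esym colv'w') i (col vcol ecol v w).
rewrite -{2}colv'w' => mboth_eq.
have := mboth_vcol_eq2 vcol ecol_ge eta i vw.
rewrite mboth_eq (mboth_vcol_eq2 vcol ecol_ge) // v'i w'i eqxx.
by case/esym/andP => /eqP-> /eqP->.
Qed.
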